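(* Let $q=n-k$, write $\mathbb R^n=\mathbb R^k\times\mathbb R^q$, let $E\subset\mathbb R^q$ be open and $B\colon E\to\mathrm{Hom}(\mathbb R^k,\mathbb R^q)$ continuous, and for $y\in E$ let $P_y=\{(t,\,y+B(y)t):t\in\mathbb R^k\}$. Suppose the planes $P_y$, $y\in E$, form a fibration of an open subset $T\subset\mathbb R^n$. Define $A\colon E\to\mathrm{Hom}(\mathbb R^{k+1},\mathbb R^q)$ by $A(y)(t,\lambda)=B(y)t+\lambda y$. Then the fibration is skew if and only if $\mathrm{Ker}(A(x)-A(y))=0$ for every pair of distinct $x,y\in E$.
   Context: A fibration of an open set $T$ by oriented affine $k$-planes is a family of pairwise disjoint oriented affine $k$-planes with union $T$ such that the map sending a point to its fiber is continuous. It is skew if any two distinct fibers are disjoint and contain no parallel lines. *)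

From HB Require Import structures.
From mathcomp Require Import all_boot all_order all_algebra.
From mathcomp Require Import all_classical all_reals all_analysis.
Set Implicit Arguments. Unset Strict Implicit. Unset Printing Implicit Defensive.
Import Order.TTheory GRing.Theory Num.Theory.
Import numFieldNormedType.Exports.
Local Open Scope classical_set_scope.
Local Open Scope ring_scope.

(* Points of R^n = R^k x R^q are pairs (t, z) with t : 'rV_k, z : 'rV_q.
   Linear maps are matrices acting on row vectors: t |-> t *m M. *)

Definition plane (R : realType) (k q : nat) (B : 'rV[R]_q -> 'M[R]_(k, q))
  (y : 'rV[R]_q) : set ('rV[R]_k * 'rV[R]_q) :=
  [set (t, y + t *m B y) | t in [set: 'rV[R]_k]].

Definition is_fibration (R : realType) (k q : nat) (E : set 'rV[R]_q)
  (P : 'rV[R]_q -> set ('rV[R]_k * 'rV[R]_q)) (T : set ('rV[R]_k * 'rV[R]_q)) :=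
  [/\ open T,
      (forall x y, E x -> E y -> x != y -> P x `&` P y = set0),
      T = \bigcup_(y in E) P y &
      exists f : 'rV[R]_k * 'rV[R]_q -> 'rV[R]_q,
        (forall p, T p -> E (f p) /\ P (f p) p) /\ {within T, continuous f}].

Definition is_line (R : realType) (V : lmodType R) (L : set V) :=
  exists (p v : V), v != 0 /\ L = [set p + s *: v | s in [set: R]].

Definition parallel_lines (V : zmodType) (L1 L2 : set V) :=
  exists w : V, L2 = [set x + w | x in L1].

Definition skew_family (R : realType) (k q : nat) (E : set 'rV[R]_q)
  (P : 'rV[R]_q -> set ('rV[R]_k * 'rV[R]_q)) :=
  forall x y, E x -> E y -> x != y ->
    P x `&` P y = set0 /\
    ~ (exists L1 L2 : set ('rV[R]_k * 'rV[R]_q),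
          [/\ is_line L1, is_line L2, L1 `<=` P x, L2 `<=` P y &
              parallel_lines L1 L2]).

Definition Amap (R : realType) (k q : nat) (B : 'rV[R]_q -> 'M[R]_(k, q))
  (y : 'rV[R]_q) (v : 'rV[R]_k * R) : 'rV[R]_q :=
  v.1 *m B y + v.2 *: y.

From HB Require Import structures.
From mathcomp Require Import all_boot all_order all_algebra.
From mathcomp Require Import all_classical all_reals all_analysis.
Set Implicit Arguments. Unset Strict Implicit. Unset Printing Implicit Defensive.
Import Order.TTheory GRing.Theory Num.Theory.
Import numFieldNormedType.Exports.
Local Open Scope classical_set_scope.
Local Open Scope ring_scope.

(* A kernel vector (t, l) of A(x) - A(y) with l != 0 rescales to (t / l, 1),
   which is exactly a common point (t / l, x + (t / l) B(x)) of P_x and P_y;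
   a kernel vector (t, 0) with t != 0 says that t B(x) = t B(y), i.e. that
   P_x and P_y share the direction (t, t B(x)), and a common direction is
   what two parallel lines in P_x and P_y amount to. The fibration hypothesis
   is only used for the disjointness of the fibers. *)

Lemma is_line_translate (R : realType) (V : lmodType R) (L : set V) (w : V) :
  is_line L -> is_line [set z + w | z in L].
Proof.
case=> p [v [v0 ->]]; exists (p + w), v; split=> //.
apply/seteqP; split=> [_ [_ [s _ <-] <-]|_ [s _ <-]].
- by exists s; rewrite // addrAC.
- by exists (p + s *: v); [exists s | rewrite addrAC].
Qed.

Section Planes.
Variables (R : realType) (k q : nat) (B : 'rV[R]_q -> 'M[R]_(k, q)).
Implicit Types (x y : 'rV[R]_q) (t : 'rV[R]_k) (z : 'rV[R]_k * 'rV[R]_q).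

Lemma planeP x z : plane B x z <-> z.2 = x + z.1 *m B x.
Proof.
split=> [[t _ <-] //|ez]; exists z.1 => //.
by rewrite -ez -surjective_pairing.
Qed.

Lemma plane_dir x z1 z2 :
  plane B x z1 -> plane B x z2 -> (z2 - z1).2 = (z2 - z1).1 *m B x.
Proof.
by move=> /planeP e1 /planeP e2; rewrite /= e1 e2 [x + z2.1 *m _]addrC addrKA mulmxBl.
Qed.

Lemma Amap_dir x t : Amap B x (t, 0) = t *m B x.
Proof. by rewrite /Amap scale0r addr0. Qed.

Lemma plane_meet_of_Amap x y t l :
  l != 0 -> Amap B x (t, l) = Amap B y (t, l) -> plane B x `&` plane B y !=set0.
Proof.
move=> l0 eqA; pose a := l^-1 *: t.
exists (a, x + a *m B x); split; apply/planeP => //=.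
move: (congr1 ( *:%R l^-1) eqA); rewrite /Amap /= !scalerDr !scalerA mulVf //.
by rewrite !scale1r -!scalemxAl addrC => ->; rewrite addrC.
Qed.

Lemma parallel_lines_in_planesP x y :
  (exists L1 L2 : set (_ * _), [/\ is_line L1, is_line L2, L1 `<=` plane B x,
                     L2 `<=` plane B y & parallel_lines L1 L2]) <->
  exists2 t : 'rV_k, t != 0 & t *m B x = t *m B y.
Proof.
split=> [[L1 [L2 [[p [v [v0 eL1]]] _ S1 S2 [w eL2]]]] | [t t0 eqB]].
- subst L1 L2.
  have line_pt s : [set p + s *: v | s in [set: R]] (p + s *: v) by exists s.
  have vx : v.2 = v.1 *m B x.
    by have := plane_dir (S1 _ (line_pt 0)) (S1 _ (line_pt 1));
      rewrite scale0r addr0 scale1r addrC addKr.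
  have vy : v.2 = v.1 *m B y.
    have Sw s : plane B y (p + s *: v + w) by apply: S2; exists (p + s *: v).
    by have := plane_dir (Sw 0) (Sw 1);
      rewrite scale0r addr0 scale1r (addrAC p) addrC addrK.
  exists v.1; last by rewrite -vx.
  by apply: contra v0 => /eqP v10; rewrite [v]surjective_pairing vx v10 mul0mx.
- pose L1 := [set (0, x) + s *: (t, t *m B x) | s in [set: R]].
  have L1_line : is_line L1.
    exists (0, x), (t, t *m B x); split=> //.
    by apply: contra t0 => /eqP/(congr1 fst) /= ->.
  exists L1, [set z + (0, y - x) | z in L1]; split=> //.
  + exact: is_line_translate.
  + by move=> _ [s _ <-]; apply/planeP => /=; rewrite add0r scalemxAl.
  + move=> _ [_ [s _ <-] <-]; apply/planeP => /=.
    by rewrite !add0r addr0 addrC addrA subrK eqB scalemxAl.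
  + by exists (0, y - x).
Qed.

End Planes.

Theorem lemma3p3 (R : realType) (k q : nat) (E : set 'rV[R]_q)
  (B : 'rV[R]_q -> 'M[R]_(k, q)) (T : set ('rV[R]_k * 'rV[R]_q)) :
  open E -> {within E, continuous B} ->
  is_fibration E (plane B) T ->
  (skew_family E (plane B) <->
   forall x y, E x -> E y -> x != y ->
     forall v : 'rV[R]_k * R, Amap B x v - Amap B y v = 0 -> v = 0).
Proof.
move=> _ _ [_ disj _ _]; split=> [skew x y Ex Ey xy [t l] /eqP|ker x y Ex Ey xy].
- rewrite subr_eq0 => /eqP eqA; have [disjxy nopar] := skew x y Ex Ey xy.
  have [l0|l0] := eqVneq l 0; last first.
    by case: (plane_meet_of_Amap l0 eqA); rewrite disjxy.
  move: eqA; rewrite {}l0 !Amap_dir => eqB.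
  have [->//|t0] := eqVneq t 0.
  by case: nopar; apply/parallel_lines_in_planesP; exists t.
- split; first exact: disj.
  case/parallel_lines_in_planesP => t t0 eqB; case/eqP: t0.
  have := ker x y Ex Ey xy (t, 0); rewrite !Amap_dir eqB subrr.
  by move=> /(_ erefl) /(congr1 fst).
Qed.
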